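(* Let $Z$ be a finite set of algebraic integers, with notation as in the context, and set \[C_Z=\prod_{\sigma:K_Z\to\mathbf{C}}\max_{x\in Z}|\sigma(x)|,\] the product over all field embeddings of $K_Z$ into $\mathbf{C}$. For every $\alpha\in C(Z;\mathbf{Z})$ such that the character $\eta_\alpha$ is non-trivial on $H_Z$, and every $p\in\mathcal{S}_Z$ with $|p|>C_Z\|\alpha\|_1^{[K_Z:\mathbf{Q}]}$, we have $\widehat{\lambda}_Z(\alpha)=\widehat{\mu}_p(\alpha)=0$.
   Context: $e(z)=e^{2i\pi z}$. $Z\subset\mathbf{C}$ finite set of algebraic integers, $K_Z=\mathbf{Q}(Z)$, $\mathbf{O}_Z$ its ring of integers. $\mathcal{S}_Z$: prime ideals $p\subset\mathbf{O}_Z$ of residual degree $1$ such that no two distinct elements of $Z$ have difference in $p$; for such $p$, $|p|=q$ is prime and $\mathbf{O}_Z/p$ is identified with $\mathbf{F}_q$, whose elements are identified with integers in $\{0,\dots,q-1\}$; $\varpi_p$ is reduction mod $p$. $C(Z;X)$ denotes maps $Z\to X$; for $\alpha\in C(Z;\mathbf{Z})$, $\|\alpha\|_1=\sum_{x\in Z}|\alpha(x)|$ and $\eta_\alpha:C(Z;\mathbf{S}^1)\to\mathbf{S}^1$, $\eta_\alpha(f)=\prod_{x\in Z}f(x)^{\alpha(x)}$. $R_Z=\{\alpha\in C(Z;\mathbf{Z})\mid\sum_x\alpha(x)x=0\}$, $H_Z=\{f\in C(Z;\mathbf{S}^1)\mid\eta_\alpha(f)=1\ \forall\alpha\in R_Z\}$,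 $\lambda_Z$ the Haar probability measure on $H_Z$ viewed as a measure on $C(Z;\mathbf{S}^1)$. For $p\in\mathcal{S}_Z$, $U_p(a)\in C(Z;\mathbf{S}^1)$ is $x\mapsto e(a\varpi_p(x)/|p|)$ for $a\in\mathbf{O}_Z/p$, and $\mu_p=\frac1{|p|}\sum_{a\in\mathbf{O}_Z/p}\delta_{U_p(a)}$. For a measure $\nu$ on $C(Z;\mathbf{S}^1)$, $\widehat\nu(\alpha)=\int\eta_\alpha\,d\nu$. *)

From HB Require Import structures.
From mathcomp Require Import all_boot all_order all_algebra.
From mathcomp Require Import algC algnum.
From mathcomp Require Import complex.
From mathcomp Require Import all_classical all_reals all_analysis.

Set Implicit Arguments.
Unset Strict Implicit.
Unset Printing Implicit Defensive.

Import Order.TTheory GRing.Theory Num.Theory.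
Local Open Scope classical_set_scope.
Local Open Scope ring_scope.

(* Number-theoretic side.  The finite set Z of algebraic integers is   *)
(* given by an injective enumeration z : 'I_n -> algC (algC = the      *)
(* algebraic numbers inside C).                                        *)

Definition is_subfield (S : algC -> Prop) : Prop :=
  [/\ S 0, S 1, (forall x y, S x -> S y -> S (x - y)),
      (forall x y, S x -> S y -> S (x * y)) & (forall x, S x -> S x^-1)].

Definition KZ n (z : 'I_n -> algC) (x : algC) : Prop :=
  forall S, is_subfield S -> (forall i, S (z i)) -> S x.

Definition OZ n (z : 'I_n -> algC) (x : algC) : Prop := KZ z x /\ x \in Aint.

Definition field_degree n (z : 'I_n -> algC) (d : nat) : Prop :=
  exists b : 'I_d -> algC,
    [/\ forall i, KZ z (b i),
        forall x, KZ z x -> exists c : 'I_d -> rat, x = \sum_i ratr (c i) * b i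
      & forall c : 'I_d -> rat, \sum_i ratr (c i) * b i = 0 -> forall i, c i = 0].

(* s is a field embedding K_Z -> C (only its values on K_Z matter) *)
Definition is_embedding n (z : 'I_n -> algC) (s : algC -> algC) : Prop :=
  s 1 = 1 /\
  forall x y, KZ z x -> KZ z y -> s (x + y) = s x + s y /\ s (x * y) = s x * s y.

Definition enumerates_embeddings n (z : 'I_n -> algC) m
    (emb : 'I_m -> algC -> algC) : Prop :=
  [/\ forall j, is_embedding z (emb j),
      forall j k, (forall x, KZ z x -> emb j x = emb k x) -> j = k
    & forall s, is_embedding z s ->
        exists j, forall x, KZ z x -> s x = emb j x].

Definition CZ n (z : 'I_n -> algC) m (emb : 'I_m -> algC -> algC) : algC :=
  \prod_(j < m) \big[Num.max/0]_(i < n) `|emb j (z i)|.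

Definition is_prime_ideal n (z : 'I_n -> algC) (p : algC -> Prop) : Prop :=
  (forall x, p x -> OZ z x) /\
  [/\ p 0,
      forall x y, p x -> p y -> p (x + y),
      forall a x, OZ z a -> p x -> p (a * x),
      ~ p 1
    & forall a b, OZ z a -> OZ z b -> p (a * b) -> p a \/ p b].

(* p has residual degree 1 and |p| = q: q is prime, q lies in p and every
   element of O_Z is congruent mod p to a rational integer, i.e.
   O_Z/p = F_q. *)
Definition residual_degree_one n (z : 'I_n -> algC) (p : algC -> Prop)
    (q : nat) : Prop :=
  [/\ prime q, p q%:R & forall x, OZ z x -> exists k : nat, p (x - k%:R)].

Definition in_SZ n (z : 'I_n -> algC) (p : algC -> Prop) (q : nat) : Prop :=
  [/\ is_prime_ideal z p, residual_degree_one z p q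
    & forall i j, i != j -> ~ p (z i - z j)].

(* w = reduction mod p restricted to Z, with F_q identified with
   {0,...,q-1} *)
Definition is_reduction n (z : 'I_n -> algC) (p : algC -> Prop) (q : nat)
    (w : 'I_n -> nat) : Prop :=
  forall i, (w i < q)%N /\ p (z i - (w i)%:R).

Definition norm1 n (a : 'I_n -> int) : nat := (\sum_i `|a i|)%N.

Definition expi2pi (R : realType) (t : R) : R[i] :=
  Complex (cos (2 * pi * t)) (sin (2 * pi * t)).

Definition eta_char (R : realType) n (a : 'I_n -> int) (f : 'I_n -> R[i]) : R[i] :=
  \prod_i f i ^ a i.

Definition RZ n (z : 'I_n -> algC) (b : 'I_n -> int) : Prop :=
  \sum_i (b i)%:~R * z i = 0.

Definition HZ (R : realType) n (z : 'I_n -> algC) (f : 'I_n -> R[i]) : Prop :=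
  (forall i, `|f i| = 1) /\ (forall b, RZ z b -> eta_char b f = 1).

Definition Up (R : realType) n (q : nat) (w : 'I_n -> nat) (a : nat)
    : 'I_n -> R[i] :=
  fun i => expi2pi ((a * w i)%:R / q%:R : R).

(* Fourier coefficient of mu_p = (1/q) sum_a delta_{U_p(a)} *)
Definition mu_hat (R : realType) n (q : nat) (w : 'I_n -> nat)
    (a : 'I_n -> int) : R[i] :=
  (q%:R)^-1 * \sum_(b < q) eta_char a (Up R q w b).

(* Angle coordinates: t in [0,1)^n  <->  (e(t_x))_x in C(Z;S^1).  A
   (Borel) probability measure on C(Z;S^1) is represented by a
   probability measure on R^n (product Borel sigma-algebra on tuples)
   concentrated on [0,1)^n. *)
Definition angles (R : realType) n (t : n.-tuple R) : 'I_n -> R[i] :=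
  fun i => expi2pi (tnth t i).

Definition cube (R : realType) n : set (n.-tuple R) :=
  [set t | forall i, 0 <= tnth t i < 1].

Definition fracR (R : realType) (x : R) : R := x - (Num.floor x)%:~R.

(* translation on the torus by angles(phi), in angle coordinates *)
Definition shift (R : realType) n (phi t : n.-tuple R) : n.-tuple R :=
  [tuple fracR (tnth t i + tnth phi i) | i < n].

(* lam is (the angle-coordinate representation of) the Haar probability
   measure lambda_Z on H_Z, viewed as a measure on C(Z;S^1): it is
   carried by H_Z and invariant under translation by every element of
   H_Z.  (The Haar probability measure exists and is unique.) *)
Definition is_Haar_HZ (R : realType) n (z : 'I_n -> algC)
    (lam : probability (n.-tuple R) R) : Prop :=
  lam (@cube R n `&` (angles (R:=R) (n:=n)) @^-1` HZ z) = 1%E /\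
  forall phi, @cube R n phi -> HZ z (angles phi) ->
    forall A, measurable A -> lam (shift phi @^-1` A) = lam A.

Definition lambda_hat (R : realType) n (lam : probability (n.-tuple R) R)
    (a : 'I_n -> int) : R[i] :=
  Complex (Rintegral lam setT (fun t => @complex.Re R (eta_char a (angles t))))
          (Rintegral lam setT (fun t => @complex.Im R (eta_char a (angles t)))).

(** For the Haar measure, translating by a point [f] of [H_Z] multiplies the
    Fourier coefficient at [alpha] by [eta_alpha f <> 1], so the coefficient is 0.
    The coefficient of [mu_p] is an average of the powers of [e(<alpha, w>/q)],
    a [q]-th root of unity, hence 0 unless [q] divides [<alpha, w>]. In that case
    [b = sum_x alpha(x) x] lies in [p], hence so does its norm
    [N(b) = prod_sigma sigma(b)], a rational integer, so [q] divides [N(b)].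
    But [|N(b)| <= C_Z |alpha|_1^m <= C_Z |alpha|_1^[K_Z:Q] < q] since there are
    [m <= [K_Z:Q]] embeddings; thus [N(b) = 0], i.e. [alpha] is a relation of [Z]
    and [eta_alpha] is trivial on [H_Z]. *)

From Pilot Require Import Defs.
From HB Require Import structures.
From mathcomp Require Import all_boot all_order all_algebra.
From mathcomp Require Import algC algnum.
From mathcomp Require Import all_field.
From mathcomp Require Import complex.
From mathcomp Require Import all_classical all_reals all_analysis.
From mathcomp Require Import measurable_realfun.
From mathcomp Require Import ring lra.

Set Implicit Arguments.
Unset Strict Implicit.
Unset Printing Implicit Defensive.

Import Order.TTheory GRing.Theory Num.Theory.
Local Open Scope classical_set_scope.
Local Open Scope ring_scope.

(* A boolean copy of [KZ], so that the closure lemmas [rpred*] apply to K_Z. *)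
Definition KZ_pred n (z : 'I_n -> algC) : {pred algC} := [pred x | `[< KZ z x >]].

Lemma KZ_predP n (z : 'I_n -> algC) x : reflect (KZ z x) (x \in KZ_pred z).
Proof. exact: asboolP. Qed.

Lemma KZ_pred_divring_closed n (z : 'I_n -> algC) : divring_closed (KZ_pred z).
Proof.
split; first by apply/KZ_predP => S [].
- hnf=> x y /KZ_predP Kx /KZ_predP Ky; apply/KZ_predP => S hS Sz.
  by case: (hS) => _ _ SB _ _; apply: SB; [apply: Kx | apply: Ky].
- hnf=> x y /KZ_predP Kx /KZ_predP Ky; apply/KZ_predP => S hS Sz.
  by case: (hS) => _ _ _ SM SV; apply: SM; [apply: Kx | apply: SV; apply: Ky].
Qed.

HB.instance Definition _ n (z : 'I_n -> algC) :=
  GRing.isDivringClosed.Build algC (KZ_pred z) (KZ_pred_divring_closed z).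

Lemma KZ_pred_z n (z : 'I_n -> algC) i : z i \in KZ_pred z.
Proof. by apply/KZ_predP => S _; apply. Qed.

Section Embedding.
Variables (n : nat) (z : 'I_n -> algC) (s : algC -> algC).
Hypothesis es : is_embedding z s.
Local Notation K := (KZ_pred z).

Lemma emb1 : s 1 = 1. Proof. by case: es. Qed.

Lemma embD : {in K &, {morph s : x y / x + y}}.
Proof. by case: es => _ sDM x y /KZ_predP Kx /KZ_predP Ky; case: (sDM x y Kx Ky). Qed.

Lemma embM : {in K &, {morph s : x y / x * y}}.
Proof. by case: es => _ sDM x y /KZ_predP Kx /KZ_predP Ky; case: (sDM x y Kx Ky). Qed.

Lemma emb0 : s 0 = 0.
Proof. by apply: (@addrI _ (s 0)); rewrite -embD ?rpred0 // !addr0. Qed.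

Lemma embN : {in K, {morph s : x / - x}}.
Proof.
move=> x Kx; apply: (@addrI _ (s x)).
by rewrite -embD ?rpredN // !subrr emb0.
Qed.

Lemma emb_nat k : s k%:R = k%:R.
Proof.
elim: k => [|k IHk]; first exact: emb0.
by rewrite -addn1 !natrD embD ?rpred_nat // IHk emb1.
Qed.

Lemma emb_int (k : int) : s k%:~R = k%:~R.
Proof.
case: k => k; first exact: emb_nat.
by rewrite NegzE !mulrNz embN ?rpred_nat // emb_nat.
Qed.

Lemma emb_eq0 x : x \in K -> (s x == 0) = (x == 0).
Proof.
move=> Kx; apply/eqP/eqP => [sx0|->]; last exact: emb0.
apply/eqP; apply: contraT => x0.
by rewrite -(oner_eq0 algC) -emb1 -(mulfV x0) embM ?rpredV // sx0 mul0r.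
Qed.

Lemma embV : {in K, {morph s : x / x^-1}}.
Proof.
move=> x Kx; have [->|x0] := eqVneq x 0; first by rewrite invr0 emb0 invr0.
have sx0 : s x != 0 by rewrite emb_eq0.
by apply: (mulfI sx0); rewrite -embM ?rpredV // !mulfV // emb1.
Qed.

Lemma emb_ratr a : s (ratr a) = ratr a.
Proof. by rewrite /ratr embM ?embV ?rpredV ?rpred_int // !emb_int. Qed.

Lemma emb_sum I (r : seq I) (P : pred I) (F : I -> algC) :
  (forall i, P i -> F i \in K) ->
  s (\sum_(i <- r | P i) F i) = \sum_(i <- r | P i) s (F i).
Proof.
move=> KF; pose Q x y := x \in K /\ s x = y.
suff [] : Q (\sum_(i <- r | P i) F i) (\sum_(i <- r | P i) s (F i)) by [].
apply: (big_ind2 Q) => [|x1 x2 y1 y2 [Kx <-] [Ky <-]|i Pi]; last by split; [apply: KF|].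
  by split; [apply: rpred0 | apply: emb0].
by split; [apply: rpredD | apply: embD].
Qed.

Lemma embX x k : x \in K -> s (x ^+ k) = s x ^+ k.
Proof.
move=> Kx; elim: k => [|k IHk]; first by rewrite !expr0 emb1.
by rewrite !exprS embM ?rpredX // IHk.
Qed.

Lemma emb_horner (P : {poly rat}) x : x \in K ->
  s (map_poly ratr P).[x] = (map_poly ratr P).[s x].
Proof.
move=> Kx; rewrite !horner_coef emb_sum => [|i _]; last first.
  by rewrite coef_map rpredM ?rpredX ?rpred_rat.
by apply: eq_bigr => i _; rewrite coef_map embM ?rpredX ?rpred_rat // emb_ratr embX.
Qed.

Lemma emb_root (P : {poly rat}) x : x \in K ->
  root (map_poly ratr P) x -> root (map_poly ratr P) (s x).
Proof. by move=> Kx; rewrite /root -emb_horner // => /eqP->; rewrite emb0. Qed.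

Lemma emb_Aint x : x \in K -> x \in Aint -> s x \in Aint.
Proof.
move=> Kx Ax; have [P [DP _] _] := minCpolyP x.
apply: (root_monic_Aint _ (minCpoly_monic x) Ax).
by rewrite DP emb_root // -DP root_minCpoly.
Qed.

End Embedding.

Lemma emb_ext n (z : 'I_n -> algC) s t :
  is_embedding z s -> is_embedding z t -> (forall i, s (z i) = t (z i)) ->
  {in KZ_pred z, s =1 t}.
Proof.
move=> es et szt x /KZ_predP Kx.
pose S y := y \in KZ_pred z /\ s y = t y.
suff [] : S x by [].
apply: Kx => [|i]; last by split; [apply: KZ_pred_z | apply: szt].
split=> [||u v [Ku su] [Kv sv]|u v [Ku su] [Kv sv]|u [Ku su]].
- by split; rewrite ?rpred0 ?(emb0 es) ?(emb0 et).
- by split; rewrite ?rpred1 ?(emb1 es) ?(emb1 et).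
- split; first exact: rpredB.
  by rewrite (embD es) ?(embD et) ?rpredN // (embN es) ?(embN et) // su sv.
- by split; rewrite ?rpredM // (embM es) ?(embM et) // su sv.
- by split; rewrite ?rpredV // (embV es) ?(embV et) // su.
Qed.

(* The [d + 1] powers [x ^+ i], [i <= d], are linearly dependent over Q. *)
Lemma size_minCpoly_KZ n (z : 'I_n -> algC) d x :
  field_degree z d -> x \in KZ_pred z -> (size (minCpoly x) <= d.+1)%N.
Proof.
move=> [b [_ span _]] /KZ_predP Kx.
have /fin_all_exists[c Dc] : forall i : 'I_d.+1,
    exists c : 'I_d -> rat, x ^+ i = \sum_j ratr (c j) * b j.
  by move=> i; apply/span/KZ_predP; rewrite rpredX //; apply/KZ_predP.
pose C : 'M[rat]_(d.+1, d) := \matrix_(i, j) c i j.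
have ker_gt0 : (0 < \rank (kermx C))%N.
  by rewrite mxrank_ker subn_gt0 (leq_ltn_trans (rank_leq_col C)).
have [i0 u_neq0] : exists i0, row i0 (kermx C) != 0.
  apply/existsP; apply: contraTT ker_gt0 => /existsPn ker0.
  suff -> : kermx C = 0 by rewrite mxrank0.
  by apply/row_matrixP => i; rewrite row0; apply/eqP; rewrite -[_ == _]negbK.
set u := row i0 (kermx C) in u_neq0.
have uC : u *m C = 0 by apply/sub_kermxP; apply: row_sub.
pose Q := \poly_(i < d.+1) u 0 (inord i).
have Q_neq0 : Q != 0.
  apply: contraNneq u_neq0 => Q0; apply/eqP/rowP => i.
  by have := congr1 (coefp i) Q0; rewrite /= coef_poly ltn_ord inord_val coef0 !mxE.
have rootQ : root (map_poly ratr Q) x.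
  have -> : map_poly ratr Q = \poly_(i < d.+1) (ratr (u 0 (inord i)) : algC).
    by apply/polyP => k; rewrite coef_map !coef_poly; case: ifP => // _; exact: rmorph0.
  rewrite /root horner_poly.
  under eq_bigr => i _ do rewrite inord_val.
  under eq_bigr => i _ do rewrite Dc mulr_sumr.
  rewrite exchange_big big1 //= => j _.
  under eq_bigr => i _ do rewrite mulrA.
  rewrite -big_distrl /=.
  suff -> : \sum_(i < d.+1) ratr (u 0 i) * ratr (c i j) = ratr ((u *m C) 0 j) :> algC.
    by rewrite uC mxE rmorph0 mul0r.
  by rewrite mxE rmorph_sum; apply: eq_bigr => i _; rewrite !mxE rmorphM.
have [p [Dp _] dvd_p] := minCpolyP x.
rewrite Dp size_map_poly (leq_trans (dvdp_leq Q_neq0 _)) ?size_poly //.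
by rewrite -dvd_p.
Qed.

(* An embedding is determined by its value at a primitive element [g] of K_Z,
   which is a root of the minimal polynomial of [g]. *)
Lemma card_embeddings_le n (z : 'I_n -> algC) d m (emb : 'I_m -> algC -> algC) :
  field_degree z d -> enumerates_embeddings z emb -> (m <= d)%N.
Proof.
move=> fd [embE emb_inj _].
set sz := [seq z i | i <- enum 'I_n].
have [g [k Dg] [Ps DPs]] := algC_PET sz.
have Kg : g \in KZ_pred z.
  rewrite Dg rpred_sum // => i _; rewrite rpredMn //.
  have /mapP[j _ ->] : sz`_i \in sz by rewrite mem_nth.
  exact: KZ_pred_z.
have zg i : exists P : {poly rat}, z i = (map_poly ratr P).[g].
  have : z i \in sz by rewrite map_f ?mem_enum.
  by rewrite DPs => /mapP[P _ ->]; exists P.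
have emb_g_inj : injective (fun j => emb j g).
  move=> j j' /= ejj'; apply: emb_inj => x /KZ_predP Kx.
  apply: (emb_ext (embE j) (embE j')) => // i.
  by have [P ->] := zg i; rewrite (emb_horner (embE j)) ?(emb_horner (embE j')) ?ejj'.
have roots : all (root (minCpoly g)) [seq emb j g | j <- enum 'I_m].
  apply/allP => _ /mapP[j _ ->]; have [P [DP _] _] := minCpolyP g.
  by rewrite DP (emb_root (embE j)) // -DP root_minCpoly.
have := max_poly_roots (negbT (minCpoly_eq0 g)) roots.
rewrite map_inj_uniq ?enum_uniq // size_map size_enum_ord => /(_ isT) le_m.
by rewrite -ltnS (leq_trans le_m) // (size_minCpoly_KZ fd).
Qed.

(* [x] lies in a Galois extension [L] of Q inside algC, and every automorphism
   of [L] extends to algC: [x] is in the fixed field of Gal(L/Q), that is Q. *)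
Lemma aut_fixed_Crat (x : algC) :
  (forall nu : {rmorphism algC -> algC}, nu x = x) -> x \in Crat.
Proof.
move=> fix_x; have [p [Dp monp] dvd_p] := minCpolyP x.
have [rs Drs] := closed_field_poly_normal (map_poly ratr p : {poly algC}).
rewrite lead_coef_map (monicP monp) rmorph1 scale1r in Drs.
have [Qn [QnC [s1 Ds1 gen_s1]]] := num_field_exists rs.
pose P := map_poly (in_alg Qn) p.
have QnCP : map_poly QnC P = map_poly ratr p.
  rewrite -map_poly_comp; apply: eq_map_poly => a /=.
  by rewrite alg_num_field fmorph_rat.
have splitP : splittingFieldFor 1 P {:Qn}.
  exists s1 => //.
  have -> : P = \prod_(y <- s1) ('X - y%:P).
    apply: (map_inj_poly (fmorph_inj QnC) (rmorph0 _)).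
    by rewrite QnCP map_prod_XsubC Drs -Ds1 big_map.
  exact: eqpxx.
have P_over1 : P \is a polyOver 1%VS by apply: alg_polyOver.
have Qn_ax : FieldExt_isSplittingField _ Qn by constructor; exists P.
pose L : splittingFieldType rat := HB.pack_for (splittingFieldType rat) Qn Qn_ax.
have galL : galois (1%VS : {vspace L}) {:L}.
  apply/and3P; split; first exact: sub1v; last exact: normalFieldf.
  apply/separableP => y _; apply: pcharf0_separable.
  by move=> k; rewrite pchar_lalg pchar_num.
have : x \in rs by rewrite -root_prod_XsubC -Drs dvd_p.
rewrite -Ds1 => /mapP[x1 _ Dx1].
have : (x1 : L) \in fixedField ('Gal({:L} / 1))%g.
  apply/fixedFieldP => [|g _]; first exact: memvf.
  have [nu Dnu] := extend_algC_subfield_aut (QnC : {rmorphism L -> algC}) g.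
  by apply: (fmorph_inj (QnC : {rmorphism L -> algC})); rewrite Dnu -Dx1 fix_x.
rewrite (galois_fixedField galL) => /vlineP[k Dk].
by rewrite Dx1 Dk /= rmorphZ_num rmorph1 mulr1 Crat_rat.
Qed.

Definition emb_norm m (emb : 'I_m -> algC -> algC) (x : algC) : algC :=
  \prod_(j < m) emb j x.

Section EmbeddingNorm.
Variables (n : nat) (z : 'I_n -> algC) (m : nat) (emb : 'I_m -> algC -> algC).
Hypothesis hemb : enumerates_embeddings z emb.
Local Notation K := (KZ_pred z).

Let embE j : is_embedding z (emb j). Proof. by case: hemb. Qed.

(* Composition with an automorphism of algC permutes the embeddings. *)
Lemma emb_norm_Crat x : x \in K -> emb_norm emb x \in Crat.
Proof.
move=> Kx; apply: aut_fixed_Crat => nu; case: hemb => _ emb_inj emb_onto.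
have /fin_all_exists[pi Dpi] : forall j, exists k, {in K, forall y, nu (emb j y) = emb k y}.
  move=> j; have [|k Dk] := emb_onto (nu \o emb j).
    split=> [|u v /KZ_predP Ku /KZ_predP Kv]; first by rewrite /= (emb1 (embE j)) rmorph1.
    by rewrite /= (embD (embE j)) ?(embM (embE j)) ?rmorphD ?rmorphM.
  by exists k => y /KZ_predP /Dk.
have pi_inj : injective pi.
  move=> j k pijk; apply: emb_inj => y /KZ_predP Ky; apply: (fmorph_inj nu).
  by rewrite !Dpi // pijk.
rewrite rmorph_prod; under eq_bigr => j _ do rewrite Dpi //.
by rewrite [RHS](reindex_inj pi_inj).
Qed.

Lemma emb_norm_int x : x \in K -> x \in Aint -> emb_norm emb x \in Num.int.
Proof.
move=> Kx Ax; apply: Cint_rat_Aint; first exact: emb_norm_Crat.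
by apply: rpred_prod => j _; apply: (emb_Aint (embE j)).
Qed.

Lemma emb_norm_neq0 x : x \in K -> x != 0 -> emb_norm emb x != 0.
Proof. by move=> Kx x0; apply/prodf_neq0 => j _; rewrite (emb_eq0 (embE j)). Qed.

(* One of the factors of the norm is the identity embedding. *)
Lemma emb_norm_factor x : x \in K -> x \in Aint -> x != 0 ->
  exists2 c, OZ z c & emb_norm emb x = c * x.
Proof.
move=> Kx Ax x0; case: hemb => _ _ emb_onto.
have [|j0 id_j0] := emb_onto id; first by split=> // u v.
pose c := \prod_(j | j != j0) emb j x.
have DN : emb_norm emb x = c * x.
  rewrite /emb_norm (bigD1 j0) //= mulrC; congr (_ * _).
  by symmetry; apply: id_j0; apply/KZ_predP.
exists c => //; split; last by apply: rpred_prod => j _; apply: (emb_Aint (embE j)).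
have /CratP[r Dr] := emb_norm_Crat Kx.
by apply/KZ_predP; rewrite -(mulfK x0 c) -DN Dr rpredM ?rpredV ?rpred_rat.
Qed.

End EmbeddingNorm.

Lemma OZ_int n (z : 'I_n -> algC) (k : int) : OZ z k%:~R.
Proof. by split; [apply/KZ_predP; apply: rpred_int | apply: Aint_int]. Qed.

Section PrimeIdeal.
Variables (n : nat) (z : 'I_n -> algC) (p : algC -> Prop).
Hypothesis hp : is_prime_ideal z p.

Lemma ideal0 : p 0.
Proof. by case: hp => _ []. Qed.

Lemma idealD x y : p x -> p y -> p (x + y).
Proof. by case: hp => _ [_ pD _ _ _]; apply: pD. Qed.

Lemma idealMl a x : OZ z a -> p x -> p (a * x).
Proof. by case: hp => _ [_ _ pM _ _]; apply: pM. Qed.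

Lemma ideal1 : ~ p 1.
Proof. by case: hp => _ []. Qed.

Lemma ideal_sum I (r : seq I) (P : pred I) (F : I -> algC) :
  (forall i, P i -> p (F i)) -> p (\sum_(i <- r | P i) F i).
Proof. by move=> pF; apply: (big_ind p) => //; [exact: ideal0 | exact: idealD]. Qed.

Lemma ideal_int_dvd q (k : int) : prime q -> p q%:R -> p k%:~R -> (q%:Z %| k)%Z.
Proof.
move=> q_pr pq pk; apply: contraT => ndvd.
have : coprimez k q.
  by rewrite coprimezE /= coprime_sym prime_coprime // -dvdzE.
case/coprimezP => [[u v] /= Duv]; exfalso; apply: ideal1.
rewrite -(mulr1z 1) -Duv intrD !intrM.
by apply: idealD; apply: idealMl => //; apply: OZ_int.
Qed.

Lemma ideal_pairing_reduction q (w : 'I_n -> nat) (a : 'I_n -> int) :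
  p q%:R -> (forall i, p (z i - (w i)%:R)) ->
  (q%:Z %| \sum_i a i * (w i)%:Z)%Z -> p (\sum_i (a i)%:~R * z i).
Proof.
move=> pq pzw /dvdzP[k Dk].
have -> : \sum_i (a i)%:~R * z i
    = \sum_i (a i)%:~R * (z i - (w i)%:R) + (\sum_i a i * (w i)%:Z)%:~R.
  rewrite rmorph_sum -big_split /=.
  by apply: eq_bigr => i _; rewrite rmorphM mulrBr subrK.
apply: idealD.
  by apply: ideal_sum => i _; apply: idealMl; [exact: OZ_int | exact: pzw].
by rewrite Dk intrM; apply: idealMl; [exact: OZ_int | exact: pq].
Qed.

End PrimeIdeal.

Lemma bigmax_ge0_ub (R : numDomainType) (I : eqType) (r : seq I) (F : I -> R) :
  (forall i, 0 <= F i) ->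
  0 <= \big[Num.max/0]_(i <- r) F i /\
  {in r, forall i, F i <= \big[Num.max/0]_(i <- r) F i}.
Proof.
move=> F0; elim: r => [|i r [M0 leM]]; first by rewrite big_nil.
have cmp := real_comparable (ger0_real (F0 i)) (ger0_real M0).
have := comparable_ge_max (Num.max (F i) (\big[Num.max/0]_(j <- r) F j)) cmp.
rewrite lexx big_cons => /esym/andP[le_iM le_rM]; split; first exact: le_trans (F0 i) le_iM.
by move=> j; rewrite inE => /predU1P[-> // | /leM /le_trans]; apply.
Qed.

Lemma norm_emb_norm_le n (z : 'I_n -> algC) m (emb : 'I_m -> algC -> algC)
    (a : 'I_n -> int) :
  enumerates_embeddings z emb ->
  `|emb_norm emb (\sum_i (a i)%:~R * z i)| <= CZ z emb * (norm1 a)%:R ^+ m.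
Proof.
move=> [embE _ _].
pose M j := \big[Num.max/0]_(i < n) `|emb j (z i)|.
have M_ub j : 0 <= M j /\ forall i, `|emb j (z i)| <= M j.
  have [M0 leM] := bigmax_ge0_ub (index_enum 'I_n) (fun i => normr_ge0 (emb j (z i))).
  by split=> // i; apply: leM; rewrite mem_index_enum.
have le_emb j : `|emb j (\sum_i (a i)%:~R * z i)| <= (norm1 a)%:R * M j.
  rewrite (emb_sum (embE j)) => [|i _]; last by rewrite rpredM ?rpred_int ?KZ_pred_z.
  rewrite /norm1 natr_sum mulr_suml (le_trans (ler_norm_sum _ _ _)) // ler_sum // => i _.
  rewrite (embM (embE j)) ?rpred_int ?KZ_pred_z // (emb_int (embE j)).
  by rewrite normrM -intr_norm -natr_absz ler_wpM2l // (M_ub j).2.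
rewrite normr_prod (@le_trans _ _ (\prod_j ((norm1 a)%:R * M j))) //.
  by apply: ler_prod => j _; rewrite normr_ge0 le_emb.
by rewrite big_split /= prodr_const card_ord mulrC.
Qed.

Lemma CZ_ge0 n (z : 'I_n -> algC) m (emb : 'I_m -> algC -> algC) : 0 <= CZ z emb.
Proof.
apply: prodr_ge0 => j _.
exact: (bigmax_ge0_ub _ (fun i => normr_ge0 (emb j (z i)))).1.
Qed.

Lemma RZ_of_pairing_dvd n (z : 'I_n -> algC) d m (emb : 'I_m -> algC -> algC)
    (a : 'I_n -> int) (p : algC -> Prop) q (w : 'I_n -> nat) :
  (forall i, z i \in Aint) -> field_degree z d -> enumerates_embeddings z emb ->
  in_SZ z p q -> is_reduction z p q w ->
  CZ z emb * (norm1 a)%:R ^+ d < q%:R ->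
  (q%:Z %| \sum_i a i * (w i)%:Z)%Z -> RZ z a.
Proof.
move=> Az fd hemb [hp [q_pr pq _] _] hw lt_q dvd_q.
rewrite /RZ; set b := \sum_i _; apply/eqP; apply: contraT => b0.
have Kb : b \in KZ_pred z.
  by apply: rpred_sum => i _; rewrite rpredM ?rpred_int ?KZ_pred_z.
have Ab : b \in Aint by apply: rpred_sum => i _; rewrite rpredM ?Aint_int.
have pb : p b := ideal_pairing_reduction hp pq (fun i => (hw i).2) dvd_q.
have /intrP[k Dk] := emb_norm_int hemb Kb Ab.
have [c Oc DN] := emb_norm_factor hemb Kb Ab b0.
have dvd_qk : (q%:Z %| k)%Z.
  by apply: (ideal_int_dvd hp q_pr pq); rewrite -Dk DN; apply: (idealMl hp Oc pb).
have k0 : k != 0 by rewrite -(intr_eq0 algC) -Dk (emb_norm_neq0 hemb Kb b0).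
have a0 : (0 < norm1 a)%N.
  rewrite lt0n; apply: contraNneq b0 => /eqP; rewrite sum_nat_eq0 => /forallP a0.
  by rewrite /b big1 // => i _; move: (a0 i); rewrite absz_eq0 => /eqP->; rewrite mul0r.
have le_qN : q%:R <= `|emb_norm emb b|.
  by rewrite Dk -intr_norm -natr_absz ler_nat dvdn_leq ?absz_gt0.
have le_Nd : `|emb_norm emb b| <= CZ z emb * (norm1 a)%:R ^+ d.
  apply: le_trans (norm_emb_norm_le a hemb) _; rewrite ler_wpM2l ?CZ_ge0 //.
  by rewrite -!natrX ler_nat leq_pexp2l // (card_embeddings_le fd hemb).
by have := le_lt_trans (le_trans le_qN le_Nd) lt_q; rewrite ltxx.
Qed.

Section ExpI2Pi.
Variable R : realType.
Local Notation e := (@expi2pi R).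

Lemma expi2pi0 : e 0 = 1.
Proof. by rewrite /expi2pi mulr0 cos0 sin0. Qed.

Lemma expi2piD x y : e (x + y) = e x * e y.
Proof.
rewrite /expi2pi mulrDr cosD sinD [RHS]/GRing.mul /=.
by congr Complex; rewrite addrC.
Qed.

Lemma expi2pi_sum I (r : seq I) (P : pred I) (F : I -> R) :
  e (\sum_(i <- r | P i) F i) = \prod_(i <- r | P i) e (F i).
Proof. exact: (big_morph e expi2piD expi2pi0). Qed.

Lemma expi2pi_neq0 x : e x != 0.
Proof.
apply: contra_eq_neq (expi2piD (- x) x) => ex0.
by rewrite addNr expi2pi0 ex0 mulr0 oner_neq0.
Qed.

Lemma expi2piN x : e (- x) = (e x)^-1.
Proof.
apply: (mulIf (expi2pi_neq0 x)).
by rewrite -expi2piD addNr expi2pi0 mulVf ?expi2pi_neq0.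
Qed.

Lemma expi2piMn x k : e (x *+ k) = e x ^+ k.
Proof. by elim: k => [|k IHk]; rewrite ?mulr0n ?expi2pi0 // mulrS exprS expi2piD IHk. Qed.

Lemma expi2piMz x (k : int) : e (x * k%:~R) = e x ^ k.
Proof.
case: k => k; first by rewrite mulr_natr expi2piMn exprnP.
by rewrite NegzE -invr_expz -exprnP mulrNz mulrN expi2piN mulr_natr expi2piMn.
Qed.

Lemma expi2pi_int (k : int) : e k%:~R = 1.
Proof.
have e1 : e 1 = 1 by rewrite /expi2pi mulr1 mulr_natl cos2pi sin2pi.
by rewrite -[k%:~R]mul1r expi2piMz e1 exp1rz.
Qed.

Lemma expi2pi_fracR x : e (fracR x) = e x.
Proof. by rewrite /fracR expi2piD -mulrNz expi2pi_int mulr1. Qed.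

Lemma expi2pi_neq1 t : 0 < t < 1 -> e t != 1.
Proof.
move=> /andP[t0 t1]; apply/eqP => et1.
have sin0 : sin (2 * pi * t) = 0 by have := congr1 (@complex.Im R) et1.
have cos1 : cos (2 * pi * t) = 1 by have := congr1 (@complex.Re R) et1.
have pi0 := @pi_gt0 R.
case: (ltrgtP t (1/2)) => ht.
- have : 0 < sin (2 * pi * t) by apply: sin_gt0_pi; apply/andP; split; nra.
  by rewrite sin0 ltxx.
- have : 0 < sin (2 * pi * t - pi) by apply: sin_gt0_pi; apply/andP; split; nra.
  have := sinDpi (2 * pi * t - pi); rewrite subrK sin0 => /eqP.
  by rewrite eq_sym oppr_eq0 => /eqP ->; rewrite ltxx.
- have : 2 * pi * t = pi by rewrite ht; field.
  by move: cos1 => /[swap] ->; rewrite cospi; lra.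
Qed.

Lemma expi2pi_onto (u : R[i]) : `|u| = 1 -> exists t, 0 <= t < 1 /\ e t = u.
Proof.
case: u => a b; rewrite normc_def /= => /(congr1 (@complex.Re R)) /= norm1.
have ab1 : a ^+ 2 + b ^+ 2 = 1.
  by rewrite -[LHS]sqr_sqrtr ?norm1 ?expr1n // addr_ge0 // sqr_ge0.
have a_itv : -1 <= a <= 1 by apply/andP; split; nra.
have pi0 := @pi_gt0 R.
have := acos_ge0 a_itv; have := acos_lepi a_itv => acos_le acos_ge.
have cosK : cos (acos a) = a by apply: acosK; rewrite in_itv /=.
have sinK : sin (acos a) = `|b|.
  by rewrite sin_acos // -sqrtr_sqr; congr Num.sqrt; lra.
pose t := acos a / (2 * pi).
have Dt : 2 * pi * t = acos a by rewrite /t; field; apply/eqP; lra.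
have t_ge0 : 0 <= t by rewrite /t divr_ge0 //; lra.
have t_le : t <= 1/2 by rewrite /t ler_pdivrMr; lra.
have [b0|b0] := leP 0 b.
  exists t; split; first by apply/andP; split => //; lra.
  by rewrite /expi2pi Dt cosK sinK ger0_norm.
have acos_gt : 0 < acos a.
  by apply: acos_gt0; apply/andP; split; [case/andP: a_itv | nra].
have t_gt0 : 0 < t by rewrite /t divr_gt0 //; lra.
exists (1 - t); split; first by apply/andP; split; lra.
have D1t : 2 * pi * (1 - t) = pi *+ 2 - acos a by rewrite mulrBr Dt mulr1 mulr_natl.
rewrite /expi2pi D1t cosB sinB cos2pi sin2pi cosK sinK ltr0_norm //.
by congr Complex; ring.
Qed.

Lemma sum_expi2pi_ratio_eq0 (q : nat) (k : int) : (0 < q)%N -> ~~ (q%:Z %| k)%Z ->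
  \sum_(b < q) e (k%:~R / q%:R) ^+ b = 0.
Proof.
case: q => // q _ ndvd; set x := e _.
have q0 : (q.+1%:R : R) != 0 by rewrite pnatr_eq0.
have xq : x ^+ q.+1 = 1.
  by rewrite -expi2piMn -[X in e X]mulr_natr mulfVK // expi2pi_int.
have x1 : x != 1.
  have -> : x = e ((k %% q.+1)%Z%:~R / q.+1%:R).
    rewrite /x {1}(divz_eq k q.+1) intrD intrM mulrDl mulfK //.
    by rewrite expi2piD expi2pi_int mul1r.
  apply: expi2pi_neq1; rewrite divr_gt0 ?ltr0n ?ltr0z //=.
    by rewrite ltr_pdivrMr ?ltr0n // mul1r pmulrn ltr_int ltz_pmod.
  by rewrite lt_neqAle modz_ge0 // andbT eq_sym; apply: contraNneq ndvd => /dvdz_mod0P.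
by move: xq => /eqP; rewrite expfS_eq1 (negbTE x1) => /eqP.
Qed.

End ExpI2Pi.

Section Characters.
Variable R : realType.
Local Notation e := (@expi2pi R).

Lemma eta_char_expi2pi n (a : 'I_n -> int) (x : 'I_n -> R) :
  eta_char a (fun i => e (x i)) = e (\sum_i x i * (a i)%:~R).
Proof. by rewrite expi2pi_sum; apply: eq_bigr => i _; rewrite expi2piMz. Qed.

Lemma eta_charM n (a : 'I_n -> int) (f g : 'I_n -> R[i]) :
  (forall i, f i != 0) -> (forall i, g i != 0) ->
  eta_char a (fun i => f i * g i) = eta_char a f * eta_char a g.
Proof.
move=> f0 g0; rewrite /eta_char -big_split /=.
by apply: eq_bigr => i _; rewrite exprzMl ?unitfE.
Qed.

Lemma eta_char_Up n q (w : 'I_n -> nat) (a : 'I_n -> int) b :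
  eta_char a (Up R q w b) = e ((\sum_i a i * (w i)%:Z)%:~R / q%:R) ^+ b.
Proof.
rewrite /Up eta_char_expi2pi -expi2piMn; congr expi2pi.
rewrite (big_morph (fun x : int => x%:~R : R) (@intrD _) (mulr0z 1)) !mulr_suml -sumrMnl.
by apply: eq_bigr => i _; rewrite -mulr_natr intrM natrM -pmulrn; ring.
Qed.

Lemma mu_hat_eq0 n q (w : 'I_n -> nat) (a : 'I_n -> int) : (0 < q)%N ->
  ~~ (q%:Z %| \sum_i a i * (w i)%:Z)%Z -> mu_hat R q w a = 0.
Proof.
move=> q_gt0 ndvd; rewrite /mu_hat.
under eq_bigr => b _ do rewrite eta_char_Up.
by rewrite sum_expi2pi_ratio_eq0 ?mulr0.
Qed.

End Characters.

Section ComplexIntegral.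
Context d (T : measurableType d) (R : realType) (mu : probability T R).
Local Notation e := (@expi2pi R).

Definition Cintegral (F : T -> R[i]) : R[i] :=
  Complex (Rintegral mu setT (fun t => complex.Re (F t)))
          (Rintegral mu setT (fun t => complex.Im (F t))).

Lemma integrable_bounded (G : T -> R) (M : R) :
  measurable_fun setT G -> (forall t, `|G t| <= M) -> mu.-integrable setT (EFin \o G).
Proof.
move=> mG G_le; apply: measurable_bounded_integrable => //.
  by have := probability_setT mu; rewrite /= => ->; rewrite ltry.
exists M; split; first exact: num_real.
by move=> M' M_lt t _; apply: le_trans (G_le t) (ltW M_lt).
Qed.

Lemma Rintegral_comp_preserving (f : T -> T) (G : T -> R) :
  measurable_fun setT f -> (forall A, measurable A -> mu (f @^-1` A) = mu A) ->
  measurable_fun setT G -> mu.-integrable setT (EFin \o (G \o f)) ->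
  Rintegral mu setT (G \o f) = Rintegral mu setT G.
Proof.
move=> mf f_pres mG iGf.
have mEG : measurable_fun setT (EFin \o G) by apply/measurable_EFinP.
have iGf' : mu.-integrable (f @^-1` setT) ((EFin \o G) \o f) by rewrite preimage_setT.
have := integral_pushforward mf mEG iGf' measurableT.
rewrite preimage_setT /Rintegral => <-.
by congr fine; apply: eq_measure_integral => A mA _; exact: f_pres.
Qed.

Lemma CintegralMr (F : T -> R[i]) (c : R[i]) :
  mu.-integrable setT (EFin \o (fun t => complex.Re (F t))) ->
  mu.-integrable setT (EFin \o (fun t => complex.Im (F t))) ->
  Cintegral (fun t => F t * c) = Cintegral F * c.
Proof.
case: c => cr ci iRe iIm; rewrite /Cintegral [RHS]/GRing.mul /=.
have iMr (G : T -> R) k : mu.-integrable setT (EFin \o G) ->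
    mu.-integrable setT (EFin \o (fun t => G t * k)).
  by move=> iG; apply: eq_integrable (integrableZr measurableT k iG).
have ReM t : complex.Re (F t * Complex cr ci)
    = complex.Re (F t) * cr - complex.Im (F t) * ci by case: (F t).
have ImM t : complex.Im (F t * Complex cr ci)
    = complex.Re (F t) * ci + complex.Im (F t) * cr by case: (F t).
congr Complex; [under eq_Rintegral do rewrite ReM | under eq_Rintegral do rewrite ImM].
  by rewrite RintegralB ?iMr // !RintegralZr.
by rewrite RintegralD ?iMr // !RintegralZr // addrC.
Qed.

Lemma measurable_expi2pi (phi : T -> R) : measurable_fun setT phi ->
  measurable_fun setT (fun t => complex.Re (e (phi t))) /\
  measurable_fun setT (fun t => complex.Im (e (phi t))).
Proof.
move=> mphi; have m2pi : measurable_fun setT (fun t => 2 * pi * phi t).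
  exact: measurable_funM.
by split; apply: measurableT_comp m2pi; apply: continuous_measurable_fun;
  [exact: continuous_cos | exact: continuous_sin].
Qed.

Lemma integrable_expi2pi (phi : T -> R) : measurable_fun setT phi ->
  mu.-integrable setT (EFin \o (fun t => complex.Re (e (phi t)))) /\
  mu.-integrable setT (EFin \o (fun t => complex.Im (e (phi t)))).
Proof.
move=> /measurable_expi2pi[mRe mIm].
by split; apply: (@integrable_bounded _ 1) => // t; [exact: cos_max | exact: sin_max].
Qed.

Lemma Cintegral_expi2piMr (phi : T -> R) (c : R[i]) : measurable_fun setT phi ->
  Cintegral (fun t => e (phi t) * c) = Cintegral (fun t => e (phi t)) * c.
Proof. by move=> /integrable_expi2pi[iRe iIm]; apply: CintegralMr. Qed.

Lemma Cintegral_expi2pi_comp (f : T -> T) (phi : T -> R) :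
  measurable_fun setT f -> (forall A, measurable A -> mu (f @^-1` A) = mu A) ->
  measurable_fun setT phi ->
  Cintegral (fun t => e (phi (f t))) = Cintegral (fun t => e (phi t)).
Proof.
move=> mf f_pres mphi; have [mRe mIm] := measurable_expi2pi mphi.
have [iRe iIm] := integrable_expi2pi (measurableT_comp mphi mf).
congr Complex.
  exact: (@Rintegral_comp_preserving f (fun t => complex.Re (e (phi t)))).
exact: (@Rintegral_comp_preserving f (fun t => complex.Im (e (phi t)))).
Qed.

End ComplexIntegral.

Section HaarFourier.
Variable R : realType.
Local Notation e := (@expi2pi R).

Lemma measurable_fracR : measurable_fun [set: R] (@fracR R).
Proof.
apply: measurable_funB => //; apply: nondecreasing_measurable => // x y le_xy.
by rewrite ler_int le_floor.
Qed.

Lemma measurable_shift n (phi : n.-tuple R) :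
  measurable_fun [set: n.-tuple R] (Defs.shift phi).
Proof.
apply/measurable_fun_tnthP => i.
have -> : (@tnth n R ^~ i) \o Defs.shift phi
    = @fracR R \o (+%R^~ (tnth phi i)) \o (@tnth n R ^~ i).
  by apply/funext => t /=; rewrite tnth_mktuple.
apply: measurableT_comp; last exact: measurable_tnth.
by apply: measurableT_comp; [exact: measurable_fracR | exact: measurable_funD].
Qed.

Lemma lambda_hat_shift n (z : 'I_n -> algC) (lam : probability (n.-tuple R) R)
    (a : 'I_n -> int) (phi : n.-tuple R) :
  is_Haar_HZ z lam -> cube phi -> HZ z (angles phi) ->
  lambda_hat lam a * eta_char a (angles phi) = lambda_hat lam a.
Proof.
move=> [_ lam_inv] cube_phi Hphi.
pose L (t : n.-tuple R) := \sum_i tnth t i * (a i)%:~R.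
have mL : measurable_fun setT L.
  by apply: measurable_sum => i; apply: measurable_funM => //; exact: measurable_tnth.
have DL t : eta_char a (angles t) = e (L t) by rewrite /angles eta_char_expi2pi.
have Lshift t : e (L (Defs.shift phi t)) = e (L t) * eta_char a (angles phi).
  rewrite -!DL -eta_charM => [|i|i]; try exact: expi2pi_neq0.
  congr eta_char; apply/funext => i.
  by rewrite /angles /Defs.shift tnth_mktuple expi2pi_fracR expi2piD.
have -> : lambda_hat lam a = Cintegral lam (fun t => e (L t)).
  by congr Complex; apply: eq_Rintegral => t _; rewrite DL.
rewrite -Cintegral_expi2piMr //.
under [X in Cintegral _ X]eq_fun do rewrite -Lshift.
exact: Cintegral_expi2pi_comp (measurable_shift phi) (lam_inv phi cube_phi Hphi) mL.
Qed.

Lemma lambda_hat_eq0 n (z : 'I_n -> algC) (lam : probability (n.-tuple R) R)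
    (a : 'I_n -> int) :
  is_Haar_HZ z lam -> (exists f : 'I_n -> R[i], HZ z f /\ eta_char a f != 1) ->
  lambda_hat lam a = 0.
Proof.
move=> Hlam [f [[f_norm f_RZ] eta_f_neq1]].
have /fin_all_exists[th Dth] i : exists t, 0 <= t < 1 /\ e t = f i.
  exact: expi2pi_onto.
pose phi := [tuple th i | i < n].
have Dphi : angles phi = f by apply/funext => i; rewrite /angles tnth_mktuple (Dth i).2.
have cube_phi : cube phi by move=> i; rewrite tnth_mktuple (Dth i).1.
have := lambda_hat_shift a Hlam cube_phi; rewrite Dphi => /(_ (conj f_norm f_RZ)).
move/eqP; rewrite -subr_eq0 -{2}[lambda_hat _ _]mulr1 -mulrBr mulf_eq0 subr_eq0.
by rewrite (negbTE eta_f_neq1) orbF => /eqP.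
Qed.

End HaarFourier.

Theorem lemma3p3 (R : realType) (n : nat) (z : 'I_n -> algC)
    (d m : nat) (emb : 'I_m -> algC -> algC)
    (lam : probability (n.-tuple R) R)
    (a : 'I_n -> int) (p : algC -> Prop) (q : nat) (w : 'I_n -> nat) :
  injective z ->
  (forall i, z i \in Aint) ->
  field_degree z d ->
  enumerates_embeddings z emb ->
  is_Haar_HZ z lam ->
  (exists f : 'I_n -> R[i], HZ z f /\ eta_char a f != 1) ->
  in_SZ z p q ->
  is_reduction z p q w ->
  CZ z emb * (norm1 a)%:R ^+ d < q%:R ->
  lambda_hat lam a = 0 /\ mu_hat R q w a = 0.
Proof.
move=> _ Az fd hemb Hlam Hf hS hw lt_q.
split; first exact: lambda_hat_eq0 Hlam Hf.
have q_gt0 : (0 < q)%N by case: hS => _ [q_pr _ _] _; exact: prime_gt0.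
apply: mu_hat_eq0 => //; apply/negP => /(RZ_of_pairing_dvd Az fd hemb hS hw lt_q) RZa.
by case: Hf => f [[_ f_RZ]]; rewrite f_RZ ?eqxx.
Qed.
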